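(* Let $\Theta$ be a branch of a tableau of $\mathbf{TAB}_{\mathbf{IB}}$. For every formula of the form $@_i\varphi$ in $\Theta$, at least one of the following holds: (1) it is a quasi-subformula of the root formula of $\Theta$; (2) it is an accessibility formula; (3) it is a quasi-subformula of $@_k\neg\Diamond k$ for some nominal $k$ occurring in $\Theta$.
   Context: Hybrid language: fix disjoint countably infinite sets $\mathbf{Prop}$ (propositional variables) and $\mathbf{Nom}$ (nominals). Formulas: $\varphi ::= p \mid i \mid \neg\varphi \mid \varphi\land\varphi \mid \Diamond\varphi \mid @_i\varphi$ with $p\in\mathbf{Prop}$, $i\in\mathbf{Nom}$; $\Box\varphi$ abbreviates $\neg\Diamond\neg\varphi$. Tableau calculus $\mathbf{TAB}_{\mathbf{IB}}$. A tableau is a well-founded tree whose nodes are formulas of the form $@_i\varphi$; its root is a formula $@_i\varphi$ (the root formula) where $i$ does not occur in $\varphi$. A branch is a maximal path; $\varphi\in\Theta$ means $\varphi$ occurs on branch $\Theta$. Each branch is extended by applying the rules below to its formulas as often as possible, except that no further formula is added to a branch once either (i) every new formula generated by applying any rule already occurs on the branch, or (ii) the branch is closed, i.e. contains $@_i\varphi$ and $@_i\neg\varphi$ for some formula $\varphi$ and nominal $i$. An accessibility formula is a formula $@_i\Diamond j$ added by rule $[\Diamond]$ (with $j$ the new nominal). Rules (premises already on the branch; conclusions added to it): [$\neg\neg$] from $@_i\neg\neg\varphi$ add $@_i\varphi$; [$\land$] from $@_i(\varphi\land\psi)$ add $@_i\varphi$ and $@_i\psi$; [$\neg\land$] from $@_i\neg(\varphi\land\psi)$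 split the branch into one extended by $@_i\neg\varphi$ and one extended by $@_i\neg\psi$; [$\Diamond$] from $@_i\Diamond\varphi$, which is not an accessibility formula, add $@_i\Diamond j$ and $@_j\varphi$ where $j$ is a nominal not occurring on the branch; this rule is applied at most once per formula, and only if $i$ is a quasi-urfather on the branch (defined below); [$\neg\Diamond$] from $@_i\neg\Diamond\varphi$ and $@_i\Diamond j$ add $@_j\neg\varphi$; [$\Box_{sym}$] from $@_i\Box\varphi$ and $@_j\Diamond i$ add $@_j\varphi$; [$@$] from $@_i@_j\varphi$ add $@_j\varphi$; [$\neg@$] from $@_i\neg@_j\varphi$ add $@_j\neg\varphi$; [$Id$] from $@_i\varphi$, which is not an accessibility formula, and $@_i j$ add $@_j\varphi$; [$Ref$] for any nominal $i$ occurring on the branch add $@_i i$; ($\mathcal{I}$) for any nominal $i$ occurring on the branch add $@_i\neg\Diamond i$. Auxiliary notions for a branch $\Theta$. $@_i\varphi$ is a quasi-subformula of $@_j\psi$ if $\varphi$ is a subformula of $\psi$, or $\varphi=\neg\chi$ with $\chi$ a subformula of $\psi$. For a nominal $i$ occurring in $\Theta$, $T^\Theta(i)=\{\varphi \mid @_i\varphi\in\Theta$ and $@_i\varphi$ is a quasi-subformula of the root formula$\}$. Nominals $i,j$ are twins if $T^\Theta(i)=T^\Theta(j)$. $i\prec_\Theta j$ if $j$ was introduced by applying $[\Diamond]$ to a formula $@_i\Diamond\varphi$; $\prec_\Theta^*$ is its reflexive transitive closure. A nominal $i$ is a quasi-urfather on $\Theta$ if there are no twins $j\neq k$ with $j\prec_\Theta^*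 i$ and $k\prec_\Theta^* i$. *)

From Stdlib Require Import List Relations.
Import ListNotations.

(* Prop and Nom are both represented by nat, kept disjoint by the constructors. *)
Inductive form : Type :=
| PVar : nat -> form
| Nom  : nat -> form
| Neg  : form -> form
| And  : form -> form -> form
| Dia  : form -> form
| At   : nat -> form -> form.

Definition Box (f : form) : form := Neg (Dia (Neg f)).

Fixpoint nom_in (i : nat) (f : form) : Prop :=
  match f with
  | PVar _ => False
  | Nom j => i = j
  | Neg g => nom_in i g
  | And g h => nom_in i g \/ nom_in i h
  | Dia g => nom_in i g
  | At j g => i = j \/ nom_in i g
  end.

Inductive subf : form -> form -> Prop :=
| sub_refl f : subf f f
| sub_neg f g : subf f g -> subf f (Neg g)
| sub_andl f g h : subf f g -> subf f (And g h)
| sub_andr f g h : subf f h -> subf f (And g h)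
| sub_dia f g : subf f g -> subf f (Dia g)
| sub_at f j g : subf f g -> subf f (At j g).

(* @_i phi is a quasi-subformula of @_j psi (independent of i, j) *)
Definition qsub (phi psi : form) : Prop :=
  subf phi psi \/ exists chi, phi = Neg chi /\ subf chi psi.

(* A tableau node: the formula @_nd_nom nd_fm.  nd_acc = Some phi marks an
   accessibility formula @_i<>j added by rule [<>] applied to @_i<>phi;
   nd_acc = None for every other node. *)
Record node : Type := mkNode { nd_nom : nat; nd_fm : form; nd_acc : option form }.

Definition branch_t := list node.

Definition onb (th : branch_t) (i : nat) (f : form) : Prop :=
  exists t, In (mkNode i f t) th.

Definition occurs (th : branch_t) (k : nat) : Prop :=
  exists n, In n th /\ (k = nd_nom n \/ nom_in k (nd_fm n)).

Definition closed (th : branch_t) : Prop :=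
  exists i f, onb th i f /\ onb th i (Neg f).

Definition T_set (i0 : nat) (phi0 : form) (th : branch_t) (i : nat) (f : form) : Prop :=
  onb th i f /\ qsub f phi0.

Definition twins (i0 : nat) (phi0 : form) (th : branch_t) (j k : nat) : Prop :=
  forall f, T_set i0 phi0 th j f <-> T_set i0 phi0 th k f.

Definition prec (th : branch_t) (i j : nat) : Prop :=
  exists phi, In (mkNode i (Dia (Nom j)) (Some phi)) th.

Definition prec_star (th : branch_t) : nat -> nat -> Prop :=
  clos_refl_trans nat (prec th).

Definition quasi_urfather (i0 : nat) (phi0 : form) (th : branch_t) (i : nat) : Prop :=
  ~ exists j k, j <> k /\ twins i0 phi0 th j k /\ prec_star th j i /\ prec_star th k i.

Definition plain (i : nat) (f : form) : node := mkNode i f None.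

(* One rule application on branch th (root formula @_i0 phi0) adding the
   list of nodes [new] to the branch (for [~/\], one alternative per step). *)
Inductive step (i0 : nat) (phi0 : form) (th : branch_t) : list node -> Prop :=
| r_negneg i f : onb th i (Neg (Neg f)) -> step i0 phi0 th [plain i f]
| r_and i f g : onb th i (And f g) -> step i0 phi0 th [plain i f; plain i g]
| r_negand_l i f g : onb th i (Neg (And f g)) -> step i0 phi0 th [plain i (Neg f)]
| r_negand_r i f g : onb th i (Neg (And f g)) -> step i0 phi0 th [plain i (Neg g)]
| r_dia i f j :
    In (mkNode i (Dia f) None) th ->              (* premise, not an accessibility formula *)
    ~ occurs th j ->
    ~ (exists j', In (mkNode i (Dia (Nom j')) (Some f)) th) ->
    quasi_urfather i0 phi0 th i ->
    step i0 phi0 th [mkNode i (Dia (Nom j)) (Some f); plain j f]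
| r_negdia i f j : onb th i (Neg (Dia f)) -> onb th i (Dia (Nom j)) ->
    step i0 phi0 th [plain j (Neg f)]
| r_boxsym i f j : onb th i (Box f) -> onb th j (Dia (Nom i)) ->
    step i0 phi0 th [plain j f]
| r_at i j f : onb th i (At j f) -> step i0 phi0 th [plain j f]
| r_negat i j f : onb th i (Neg (At j f)) -> step i0 phi0 th [plain j (Neg f)]
| r_id i f j : In (mkNode i f None) th -> onb th i (Nom j) -> step i0 phi0 th [plain j f]
| r_ref i : occurs th i -> step i0 phi0 th [plain i (Nom i)]
| r_irr i : occurs th i -> step i0 phi0 th [plain i (Neg (Dia (Nom i)))].

Definition saturated (i0 : nat) (phi0 : form) (th : branch_t) : Prop :=
  forall new, step i0 phi0 th new -> forall n, In n new -> onb th (nd_nom n) (nd_fm n).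

Inductive tab_path (i0 : nat) (phi0 : form) : branch_t -> Prop :=
| tp_root : ~ nom_in i0 phi0 -> tab_path i0 phi0 [plain i0 phi0]
| tp_step th new : tab_path i0 phi0 th -> ~ closed th -> ~ saturated i0 phi0 th ->
    step i0 phi0 th new -> tab_path i0 phi0 (th ++ new).

(* a branch: a (finite, since tableaux are well-founded) maximal path *)
Definition is_branch (i0 : nat) (phi0 : form) (th : branch_t) : Prop :=
  tab_path i0 phi0 th /\ (closed th \/ saturated i0 phi0 th).

(* Every rule of TAB_IB either decomposes a formula already on the branch, so
   that its conclusion is a subformula or a negated subformula of the premise,
   or it concludes @_i i, @_i ¬◇i or an accessibility formula @_i ◇j about a
   nominal on the branch, all subformulas of ¬◇k for some such k.  Hence every
   formula of a branch is a quasi-subformula of the root formula or of some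
   ¬◇k. *)
From Stdlib Require Import List Relations.

Lemma subf_trans a b c : subf a b -> subf b c -> subf a c.
Proof. intros Hab Hbc; induction Hbc; eauto using subf. Qed.

Lemma qsub_subf a b psi : qsub a psi -> subf b a -> qsub b psi.
Proof.
  intros [Ha | [chi [-> Hchi]]] Hb.
  - left; eapply subf_trans; eauto.
  - inversion Hb; subst.
    + right; eauto.
    + left; eapply subf_trans; eauto.
Qed.

Lemma qsub_neg_subf a b psi : qsub (Neg a) psi -> subf b a -> qsub (Neg b) psi.
Proof.
  intros [Ha | [chi [Echi Hchi]]] Hb; right; exists b; split; auto.
  - apply subf_trans with (Neg a); eauto using subf.
  - injection Echi as ->; eapply subf_trans; eauto.
Qed.

Definition in_closure (phi0 : form) (th : branch_t) (f : form) : Prop :=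
  qsub f phi0 \/ exists k, occurs th k /\ qsub f (Neg (Dia (Nom k))).

Lemma in_closure_subf phi0 th a b :
  in_closure phi0 th a -> subf b a -> in_closure phi0 th b.
Proof.
  intros [Ha | [k [Hk Ha]]] Hb; [left | right; exists k]; eauto using qsub_subf.
Qed.

Lemma in_closure_neg_subf phi0 th a b :
  in_closure phi0 th (Neg a) -> subf b a -> in_closure phi0 th (Neg b).
Proof.
  intros [Ha | [k [Hk Ha]]] Hb; [left | right; exists k]; eauto using qsub_neg_subf.
Qed.

Lemma occurs_app th new k : occurs th k -> occurs (th ++ new) k.
Proof. intros [n [Hn Hk]]; exists n; split; auto using in_or_app. Qed.

Lemma in_closure_app phi0 th new f :
  in_closure phi0 th f -> in_closure phi0 (th ++ new) f.
Proof.
  intros [Hf | [k [Hk Hf]]]; [left | right; exists k]; auto using occurs_app.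
Qed.

Lemma in_closure_occurs phi0 th k f :
  occurs th k -> subf f (Neg (Dia (Nom k))) -> in_closure phi0 th f.
Proof. intros Hk Hf; right; exists k; split; [exact Hk | left; exact Hf]. Qed.

Lemma step_in_closure i0 phi0 th new :
  (forall n, In n th -> in_closure phi0 th (nd_fm n)) ->
  step i0 phi0 th new ->
  forall n, In n new -> in_closure phi0 (th ++ new) (nd_fm n).
Proof.
  intros Hth Hstep.
  assert (Hon : forall i f, onb th i f -> in_closure phi0 th f)
    by (intros i f [t Ht]; exact (Hth _ Ht)).
  destruct Hstep; intros n Hn; simpl in Hn;
    repeat destruct Hn as [<- | Hn]; try contradiction; simpl.
  - apply in_closure_app, in_closure_subf with (Neg (Neg f)); eauto using subf.
  - apply in_closure_app, in_closure_subf with (And f g); eauto using subf.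
  - apply in_closure_app, in_closure_subf with (And f g); eauto using subf.
  - apply in_closure_app, in_closure_neg_subf with (And f g); eauto using subf.
  - apply in_closure_app, in_closure_neg_subf with (And f g); eauto using subf.
  - apply in_closure_occurs with j; [| eauto using subf].
    exists (mkNode i (Dia (Nom j)) (Some f)); split; [| now right].
    apply in_or_app; right; now left.
  - apply in_closure_app, in_closure_subf with (Dia f); [exact (Hth _ H) | eauto using subf].
  - apply in_closure_app, in_closure_neg_subf with (Dia f); eauto using subf.
  - apply in_closure_app, in_closure_subf with (Box f); unfold Box; eauto using subf.
  - apply in_closure_app, in_closure_subf with (At j f); eauto using subf.
  - apply in_closure_app, in_closure_neg_subf with (At j f); eauto using subf.
  - apply in_closure_app; exact (Hth _ H).
  - apply in_closure_app, in_closure_occurs with i; eauto using subf.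
  - apply in_closure_app, in_closure_occurs with i; eauto using subf.
Qed.

Lemma tab_path_in_closure i0 phi0 th :
  tab_path i0 phi0 th -> forall n, In n th -> in_closure phi0 th (nd_fm n).
Proof.
  induction 1 as [_ | th new _ IH _ _ Hstep].
  - intros n [<- | []]; left; left; constructor.
  - intros n Hn; apply in_app_or in Hn as [Hn | Hn].
    + apply in_closure_app, IH, Hn.
    + exact (step_in_closure _ _ _ _ IH Hstep n Hn).
Qed.

Theorem lemma1 (i0 : nat) (phi0 : form) (th : branch_t) :
  is_branch i0 phi0 th ->
  forall n : node, In n th ->
    qsub (nd_fm n) phi0
    \/ nd_acc n <> None
    \/ (exists k, occurs th k /\ qsub (nd_fm n) (Neg (Dia (Nom k)))).
Proof.
  intros [Hpath _] n Hn.
  destruct (tab_path_in_closure _ _ _ Hpath n Hn); auto.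
Qed.
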